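(* Let $K$ be a commutative Noetherian ring with $1$ and let $X$ be a finite set. Every right ideal $R$ of the free $K$-algebra $K\langle X\rangle$ such that $K\langle X\rangle/R$ is a finitely generated $K$-module is finitely presented as a $K$-algebra.
   Context: The free $K$-algebra $K\langle X\rangle$ is the semigroup ring over $K$ of the free semigroup $X^+$ (polynomials in non-commuting variables from $X$ without constant term; no identity). A $K$-algebra is finitely presented if it is isomorphic to $K\langle Y\rangle/I$ with $Y$ finite and $I$ an ideal of $K\langle Y\rangle$ finitely generated as an ideal. *)

From mathcomp Require Import all_boot all_algebra.
Set Implicit Arguments. Unset Strict Implicit. Unset Printing Implicit Defensive.
Import GRing.Theory.
Local Open Scope ring_scope.

Definition is_ideal (K : comNzRingType) (I : K -> Prop) : Prop :=
  I 0 /\ (forall a b, I a -> I b -> I (a + b)) /\ (forall c a, I a -> I (c * a)).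

Definition noetherian (K : comNzRingType) : Prop :=
  forall I : K -> Prop, is_ideal I ->
    exists (n : nat) (g : 'I_n -> K),
      forall a, I a <-> exists c : 'I_n -> K, a = \sum_(i < n) c i * g i.

(* An element of K<X> is represented by its coefficient function on words
   (elements of the free monoid seq X); it must vanish on the empty word
   (no constant term) and have finite support (X is finite, so finite
   support = vanishing on all sufficiently long words). *)

Definition is_ncpoly (K : comNzRingType) (X : finType) (f : seq X -> K) : Prop :=
  f [::] = 0 /\ exists N : nat, forall w : seq X, (N <= size w)%N -> f w = 0.

Definition nczero (K : comNzRingType) (X : finType) : seq X -> K := fun _ => 0.

Definition ncadd (K : comNzRingType) (X : finType) (f g : seq X -> K) : seq X -> K :=
  fun w => f w + g w.

Definition ncscale (K : comNzRingType) (X : finType) (c : K) (f : seq X -> K) : seq X -> K :=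
  fun w => c * f w.

(* product in the semigroup ring of X^+ : (fg)(w) = sum over w = u v of f(u) g(v)
   (the splits with u or v empty contribute 0 since f [::] = g [::] = 0) *)
Definition ncmul (K : comNzRingType) (X : finType) (f g : seq X -> K) : seq X -> K :=
  fun w => \sum_(i < (size w).+1) f (take i w) * g (drop i w).

Definition is_right_ideal (K : comNzRingType) (X : finType) (R : (seq X -> K) -> Prop) : Prop :=
  (forall f, R f -> is_ncpoly f) /\
  R (@nczero K X) /\
  (forall f g, R f -> R g -> R (ncadd f g)) /\
  (forall c f, R f -> R (ncscale c f)) /\
  (forall f g, R f -> is_ncpoly g -> R (ncmul f g)).

Definition quotient_fg (K : comNzRingType) (X : finType) (R : (seq X -> K) -> Prop) : Prop :=
  exists (n : nat) (g : 'I_n -> seq X -> K),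
    (forall i, is_ncpoly (g i)) /\
    forall f, is_ncpoly f ->
      exists c : 'I_n -> K, R (fun w => f w - \sum_(i < n) c i * g i w).

Inductive in_gen_ideal (K : comNzRingType) (Y : finType) (m : nat)
    (rels : 'I_m -> seq Y -> K) : (seq Y -> K) -> Prop :=
| gi_gen i : in_gen_ideal rels (rels i)
| gi_zero : in_gen_ideal rels (@nczero K Y)
| gi_add f g : in_gen_ideal rels f -> in_gen_ideal rels g -> in_gen_ideal rels (ncadd f g)
| gi_scale c f : in_gen_ideal rels f -> in_gen_ideal rels (ncscale c f)
| gi_mull a f : is_ncpoly a -> in_gen_ideal rels f -> in_gen_ideal rels (ncmul a f)
| gi_mulr f b : is_ncpoly b -> in_gen_ideal rels f -> in_gen_ideal rels (ncmul f b).

Definition is_alg_hom (K : comNzRingType) (Y X : finType) (phi : (seq Y -> K) -> (seq X -> K)) : Prop :=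
  (forall f g, is_ncpoly f -> is_ncpoly g -> phi (ncadd f g) = ncadd (phi f) (phi g)) /\
  (forall c f, is_ncpoly f -> phi (ncscale c f) = ncscale c (phi f)) /\
  (forall f g, is_ncpoly f -> is_ncpoly g -> phi (ncmul f g) = ncmul (phi f) (phi g)).

(* The subalgebra R of K<X> is finitely presented: R is isomorphic (as a K-algebra)
   to K<Y>/I with Y finite and I a finitely generated ideal; i.e. there is a
   K-algebra homomorphism from K<Y> onto R whose kernel is I (first isomorphism
   theorem). *)
Definition fin_presented_subalg (K : comNzRingType) (X : finType) (R : (seq X -> K) -> Prop) : Prop :=
  exists (Y : finType) (phi : (seq Y -> K) -> (seq X -> K)) (m : nat) (rels : 'I_m -> seq Y -> K),
    (forall i, is_ncpoly (rels i)) /\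
    is_alg_hom phi /\
    (forall f, is_ncpoly f -> R (phi f)) /\
    (forall r, R r -> exists f, is_ncpoly f /\ phi f = r) /\
    (forall f, is_ncpoly f -> (phi f = @nczero K X <-> in_gen_ideal rels f)).

(* Pick [k0] such that every word of length [k0 + 1] is congruent modulo [R]
   to a polynomial of degree at most [k0] (constant term allowed).  Such
   polynomials then serve as normal forms modulo [R], on which words act on
   the right.  As a K-algebra, [R] is generated by the products [g * t] with
   [t] a word of length at most [k0] and [g] either one of finitely many
   generators [sig j] of the K-module of normal forms lying in [R] (finitely
   generated as K is Noetherian) or a reduction [t' x - nf (t' x)] with
   [size t' = k0].  Reducing an element of [R] to normal form letter by
   letter and recording every reduction step yields a canonical preimage in
   the free algebra on these generators.  The relations are a finite
   generating set of the syzygies of the [sig j], and, for every generator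
   and every product of two generators, its difference with the canonical
   preimage of its image.  Induction on monomials shows that every element
   is congruent modulo the relations to the canonical preimage of its image,
   so the kernel is generated by the relations. *)

From HB Require Import structures.
From mathcomp Require Import all_boot all_algebra.
From mathcomp Require Import boolp zify.
Set Implicit Arguments. Unset Strict Implicit. Unset Printing Implicit Defensive.
Import GRing.Theory.
Local Open Scope ring_scope.

Section Series.
Variables (K : comNzRingType) (X : finType).

(* The unital algebra of formal series over the words on [X]; the free
   non-unital algebra of the statement is its subset [is_ncpoly]. *)
Definition series : Type := seq X -> K.
HB.instance Definition _ := Choice.on series.

Definition ncopp (f : series) : series := fun w => - f w.

Lemma ncaddA : associative (@ncadd K X).
Proof. by move=> f g h; apply: funext => w; rewrite /ncadd addrA. Qed.
Lemma ncaddC : commutative (@ncadd K X).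
Proof. by move=> f g; apply: funext => w; rewrite /ncadd addrC. Qed.
Lemma ncadd0 : left_id (@nczero K X) (@ncadd K X).
Proof. by move=> f; apply: funext => w; rewrite /ncadd add0r. Qed.
Lemma ncaddN : left_inverse (@nczero K X) ncopp (@ncadd K X).
Proof. by move=> f; apply: funext => w; rewrite /ncadd addNr. Qed.

HB.instance Definition _ := GRing.isZmodule.Build series ncaddA ncaddC ncadd0 ncaddN.

Definition monom (u : seq X) : series := fun w => (w == u)%:R.

Definition lquo (x : X) (f : series) : series := fun u => f (x :: u).

Lemma ncmul_nil (f g : series) : ncmul f g [::] = f [::] * g [::].
Proof. by rewrite /ncmul big_ord_recl big_ord0 addr0. Qed.

Lemma ncmul_cons (f g : series) x w :
  ncmul f g (x :: w) = f [::] * g (x :: w) + ncmul (lquo x f) g w.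
Proof. by rewrite /ncmul /= big_ord_recl. Qed.

Lemma ncmulDl (f f' g : series) : ncmul (ncadd f f') g = ncadd (ncmul f g) (ncmul f' g).
Proof.
by apply: funext => w; rewrite /ncmul /ncadd -big_split; apply: eq_bigr => i _; rewrite mulrDl.
Qed.
Lemma ncmulDr (f g g' : series) : ncmul f (ncadd g g') = ncadd (ncmul f g) (ncmul f g').
Proof.
by apply: funext => w; rewrite /ncmul /ncadd -big_split; apply: eq_bigr => i _; rewrite mulrDr.
Qed.
Lemma ncmulZl c (f g : series) : ncmul (ncscale c f) g = ncscale c (ncmul f g).
Proof.
by apply: funext => w; rewrite /ncmul /ncscale mulr_sumr; apply: eq_bigr => i _; rewrite mulrA.
Qed.
Lemma ncmulZr c (f g : series) : ncmul f (ncscale c g) = ncscale c (ncmul f g).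
Proof.
by apply: funext => w; rewrite /ncmul /ncscale mulr_sumr; apply: eq_bigr => i _; rewrite mulrCA.
Qed.
Lemma ncmul0l (g : series) : ncmul (@nczero K X) g = @nczero K X.
Proof. by apply: funext => w; rewrite /ncmul big1 // => i _; rewrite mul0r. Qed.

Lemma ncmulA : associative (@ncmul K X).
Proof.
move=> f g h; apply: funext => w; elim: w f g h => [|x w IH] f g h.
  by rewrite !ncmul_nil mulrA.
rewrite !ncmul_cons.
have -> : lquo x (ncmul f g) = ncadd (ncscale (f [::]) (lquo x g)) (ncmul (lquo x f) g).
  by apply: funext => u; rewrite /lquo ncmul_cons.
rewrite ncmul_nil ncmulDl ncmulZl /ncadd /ncscale -IH.
by rewrite mulrDr mulrA addrA.
Qed.

Lemma ncmul1 : left_id (monom [::]) (@ncmul K X).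
Proof.
move=> f; apply: funext => -[|x w]; first by rewrite ncmul_nil mul1r.
rewrite ncmul_cons.
have -> : lquo x (monom [::]) = @nczero K X by apply: funext.
by rewrite ncmul0l mul1r addr0.
Qed.
Lemma ncmulr1 : right_id (monom [::]) (@ncmul K X).
Proof.
move=> f; apply: funext => w; elim: w f => [|x w IH] f; first by rewrite ncmul_nil mulr1.
by rewrite ncmul_cons /= mulr0 add0r IH.
Qed.
Lemma monom_nil_neq0 : monom [::] != 0.
Proof. by apply/eqP => /(congr1 (fun f : series => f [::])) /eqP; rewrite oner_eq0. Qed.

HB.instance Definition _ := GRing.Zmodule_isNzRing.Build series
  ncmulA ncmul1 ncmulr1 ncmulDl ncmulDr monom_nil_neq0.

Lemma ncscaleA a b (f : series) : ncscale a (ncscale b f) = ncscale (a * b) f :> series.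
Proof. by apply: funext => w; rewrite /ncscale mulrA. Qed.
Lemma ncscale1 : left_id 1 (@ncscale K X).
Proof. by move=> f; apply: funext => w; rewrite /ncscale mul1r. Qed.
Lemma ncscaleDr : right_distributive (@ncscale K X : K -> series -> series) +%R.
Proof. by move=> a f g; apply: funext => w; rewrite /ncscale /= /ncadd mulrDr. Qed.
Lemma ncscaleDl (f : series) a b : ncscale (a + b) f = (ncscale a f : series) + ncscale b f.
Proof. by apply: funext => w; rewrite /ncscale /= /ncadd mulrDl. Qed.

HB.instance Definition _ := GRing.Zmodule_isLmodule.Build K series
  ncscaleA ncscale1 ncscaleDr ncscaleDl.
HB.instance Definition _ :=
  GRing.Lmodule_isLalgebra.Build K series (fun c f g => esym (ncmulZl c f g)).
HB.instance Definition _ :=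
  GRing.Lalgebra_isAlgebra.Build K series (fun c f g => esym (ncmulZr c f g)).

Lemma series_addE (f g : series) w : (f + g) w = f w + g w. Proof. by []. Qed.
Lemma series_oppE (f : series) w : (- f) w = - f w. Proof. by []. Qed.
Lemma series_scaleE a (f : series) w : (a *: f) w = a * f w. Proof. by []. Qed.
Lemma series_mulE (f g : series) w : (f * g) w = ncmul f g w. Proof. by []. Qed.
Lemma series_sumE I (r : seq I) (P : pred I) (F : I -> series) w :
  (\sum_(i <- r | P i) F i) w = \sum_(i <- r | P i) F i w.
Proof.
elim: r => [|i r IH]; first by rewrite !big_nil.
by rewrite !big_cons; case: (P i); rewrite ?series_addE IH.
Qed.

Lemma monom_nil : monom [::] = 1. Proof. by []. Qed.

Lemma monomM u v : monom u * monom v = monom (u ++ v).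
Proof.
apply: funext => w; rewrite series_mulE; elim: w u v => [|x w IH] u v.
  by rewrite ncmul_nil /monom; case: u => [|y u]; case: v => [|z v]; rewrite ?mulr1 ?mulr0 ?mul0r.
rewrite ncmul_cons; case: u => [|y u] /=.
  have -> : lquo x (monom [::]) = 0 by apply: funext.
  by rewrite ncmul0l addr0 mul1r.
have -> : lquo x (monom (y :: u)) = (x == y)%:R *: monom u.
  apply: funext => t; rewrite /lquo /monom series_scaleE eqseq_cons.
  by case: (x == y); rewrite ?mul1r ?mul0r.
rewrite mul0r add0r ncmulZl /ncscale IH /monom eqseq_cons.
by case: (x == y); rewrite ?mul1r ?mul0r.
Qed.

Lemma ncmul_local (f f' g g' : series) w :
  (forall v, (size v <= size w)%N -> f v = f' v /\ g v = g' v) ->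
  ncmul f g w = ncmul f' g' w.
Proof.
move=> H; apply: eq_bigr => i _.
have [-> _] : f (take i w) = f' (take i w) /\ g (take i w) = g' (take i w).
  by apply: H; rewrite size_take_min geq_minr.
by have [_ ->] := H (drop i w) (leq_trans (eq_leq (size_drop _ _)) (leq_subr _ _)).
Qed.

End Series.

Section Words.
Variable X : finType.

Definition words (n : nat) : seq (seq X) := map val (enum {: n.-tuple X}).

Lemma mem_words n w : (w \in words n) = (size w == n).
Proof.
apply/mapP/eqP => [[t _ ->]|<-]; first exact: size_tuple.
by exists (in_tuple w); rewrite ?mem_enum.
Qed.
Lemma uniq_words n : uniq (words n).
Proof. by rewrite map_inj_uniq ?enum_uniq //; apply: val_inj. Qed.

Definition words_lt (N : nat) : seq (seq X) := flatten [seq words n | n <- iota 0 N].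

Lemma mem_words_lt N w : (w \in words_lt N) = (size w < N)%N.
Proof.
apply/flattenP/idP => [[s /mapP [n]]|hw].
  by rewrite mem_iota add0n => /andP [_ hn] ->; rewrite mem_words => /eqP ->.
exists (words (size w)); rewrite ?mem_words //.
by apply/mapP; exists (size w); rewrite // mem_iota.
Qed.
Lemma uniq_words_lt N : uniq (words_lt N).
Proof.
elim: N => [|N IH] //; rewrite /words_lt -addn1 iotaD map_cat flatten_cat cat_uniq.
rewrite IH /= cats0 uniq_words andbT; apply/hasPn => w; rewrite mem_words => /eqP hw.
by rewrite mem_words_lt hw ltnn.
Qed.

Lemma big_words_lt_widen N N' (V : zmodType) (F : seq X -> V) :
  (N <= N')%N -> (forall w, (N <= size w)%N -> F w = 0) ->
  \sum_(u <- words_lt N') F u = \sum_(u <- words_lt N) F u.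
Proof.
move=> le H; rewrite /words_lt -(subnKC le) iotaD map_cat flatten_cat big_cat /=.
rewrite [X in _ + X]big1_seq ?addr0 // => u /andP [_].
move/flattenP => [s /mapP [n]]; rewrite mem_iota => /andP [hn _] ->.
by rewrite mem_words => /eqP hu; apply: H; rewrite hu.
Qed.

Lemma big_uniq_pick (T : eqType) (V : zmodType) (r : seq T) (F : T -> V) w : uniq r ->
  \sum_(u <- r) F u *+ (u == w) = if w \in r then F w else 0.
Proof.
elim: r => [|a r IH] /=; first by rewrite big_nil.
case/andP => ar ur; rewrite big_cons IH // in_cons.
by case: (eqVneq a w) => [<-|ne] /=; rewrite ?(negbTE ar) ?addr0 ?add0r.
Qed.

End Words.

Section Degree.
Variables (K : comNzRingType) (X : finType).
Implicit Types f g : series K X.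

Definition deg_lt N f := forall w, (N <= size w)%N -> f w = 0.
Definition order_ge k f := forall w, (size w < k)%N -> f w = 0.

Lemma deg_lt_leq N N' f : (N <= N')%N -> deg_lt N f -> deg_lt N' f.
Proof. by move=> le H w hw; apply/H/(leq_trans le). Qed.
Lemma deg_ltD N f g : deg_lt N f -> deg_lt N g -> deg_lt N (f + g).
Proof. by move=> Hf Hg w hw; rewrite series_addE Hf ?Hg ?addr0. Qed.
Lemma deg_ltZ N a f : deg_lt N f -> deg_lt N (a *: f).
Proof. by move=> Hf w hw; rewrite series_scaleE Hf ?mulr0. Qed.
Lemma deg_ltN N f : deg_lt N f -> deg_lt N (- f).
Proof. by rewrite -scaleN1r; apply: deg_ltZ. Qed.
Lemma deg_lt_sum N I (r : seq I) (F : I -> series K X) :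
  (forall i, deg_lt N (F i)) -> deg_lt N (\sum_(i <- r) F i).
Proof. by move=> H w hw; rewrite series_sumE big1 // => i _; rewrite H. Qed.
Lemma deg_ltM a b f g : deg_lt a f -> deg_lt b g -> deg_lt (a + b) (f * g).
Proof.
move=> Hf Hg w hw; rewrite series_mulE /ncmul big1 // => i _.
have hi := ltn_ord i.
have [lt|ge] := ltnP i a.
  by rewrite (Hg (drop i w)) ?mulr0 // size_drop; lia.
by rewrite (Hf (take i w)) ?mul0r // size_take_min; lia.
Qed.
Lemma deg_lt_monom u : deg_lt (size u).+1 (monom K u).
Proof. by move=> w hw; rewrite /monom; case: eqP => // E; rewrite E ltnn in hw. Qed.

Lemma order_geD k f g : order_ge k f -> order_ge k g -> order_ge k (f + g).
Proof. by move=> Hf Hg w hw; rewrite series_addE Hf ?Hg ?addr0. Qed.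
Lemma order_geZ k a f : order_ge k f -> order_ge k (a *: f).
Proof. by move=> Hf w hw; rewrite series_scaleE Hf ?mulr0. Qed.
Lemma order_geM a b f g : order_ge a f -> order_ge b g -> order_ge (a + b) (f * g).
Proof.
move=> Hf Hg w hw; rewrite series_mulE /ncmul big1 // => i _.
have hi := ltn_ord i.
have [lt|ge] := ltnP i a.
  by rewrite (Hf (take i w)) ?mul0r // size_take_min; lia.
by rewrite (Hg (drop i w)) ?mulr0 // size_drop; lia.
Qed.

Lemma series_expand N (f : series K X) :
  deg_lt N f -> f = \sum_(u <- words_lt X N) f u *: monom K u.
Proof.
move=> Hf; apply: funext => w; rewrite series_sumE.
under eq_bigr do rewrite series_scaleE /monom mulr_natr eq_sym.
rewrite big_uniq_pick ?uniq_words_lt // mem_words_lt.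
by case: ltnP => // hw; rewrite Hf.
Qed.

End Degree.

Section Subst.
Variables (K : comNzRingType) (X Y : finType) (img : Y -> series K X).

Definition monom_img (u : seq Y) : series K X := \prod_(y <- u) img y.

(* Only words [u] with [size u <= size w] are summed: this gives the whole
   coefficient of [w] when the [img y] have no constant term. *)
Definition ncsubst (F : series K Y) : series K X :=
  fun w => \sum_(u <- words_lt Y (size w).+1) F u * monom_img u w.

Lemma ncsubst_is_linear : linear ncsubst.
Proof.
move=> a F G; apply: funext => w; rewrite series_addE series_scaleE /ncsubst mulr_sumr -big_split.
by apply: eq_bigr => u _; rewrite series_addE series_scaleE mulrDl mulrA.
Qed.
HB.instance Definition _ :=
  GRing.isLinear.Build K (series K Y) (series K X) *:%R ncsubst ncsubst_is_linear.

Hypothesis img_order : forall y, order_ge 1 (img y).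

Lemma monom_img_cat u v : monom_img (u ++ v) = monom_img u * monom_img v.
Proof. by rewrite /monom_img big_cat. Qed.

Lemma order_ge_monom_img u : order_ge (size u) (monom_img u).
Proof.
elim: u => [|y u IH]; first by move=> w.
by rewrite /monom_img big_cons; apply: (order_geM (img_order y) IH).
Qed.

Lemma ncsubst_monom u : ncsubst (monom K u) = monom_img u.
Proof.
apply: funext => w; rewrite /ncsubst.
under eq_bigr do rewrite /monom mulr_natl.
rewrite big_uniq_pick ?uniq_words_lt // mem_words_lt.
by case: ltnP => // h; rewrite order_ge_monom_img.
Qed.

Lemma ncsubst_expand N (F : series K Y) :
  deg_lt N F -> ncsubst F = \sum_(u <- words_lt Y N) F u *: monom_img u.
Proof.
move=> HF; rewrite {1}(series_expand HF) linear_sum.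
by apply: eq_bigr => u _; rewrite linearZ /= ncsubst_monom.
Qed.

Lemma ncsubst_mul_deg_lt N (F G : series K Y) : deg_lt N F -> deg_lt N G ->
  ncsubst (F * G) = ncsubst F * ncsubst G.
Proof.
move=> HF HG; rewrite (ncsubst_expand HF) (ncsubst_expand HG).
rewrite {1}(series_expand HF) {1}(series_expand HG) mulr_suml linear_sum mulr_suml.
apply: eq_bigr => u _; rewrite mulr_sumr linear_sum mulr_sumr; apply: eq_bigr => v _.
by rewrite -scalerAl -!scalerAr -scalerAl !linearZ /= monomM ncsubst_monom monom_img_cat.
Qed.

Definition trunc_deg N (F : series K Y) : series K Y := fun u => if (size u < N)%N then F u else 0.

Lemma deg_lt_trunc_deg N F : deg_lt N (trunc_deg N F).
Proof. by move=> u hu; rewrite /trunc_deg ltnNge hu. Qed.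

Lemma ncsubst_trunc_deg N F w : (size w < N)%N -> ncsubst (trunc_deg N F) w = ncsubst F w.
Proof.
move=> h; rewrite /ncsubst; apply: eq_big_seq => u; rewrite mem_words_lt => hu.
by rewrite /trunc_deg (leq_ltn_trans _ h).
Qed.

Lemma ncsubstM F G : ncsubst (F * G) = ncsubst F * ncsubst G.
Proof.
apply: funext => w; set N := (size w).+1.
have -> : ncsubst (F * G) w = ncsubst (trunc_deg N F * trunc_deg N G) w.
  rewrite /ncsubst; apply: eq_big_seq => u; rewrite mem_words_lt => hu; congr (_ * _).
  by rewrite !series_mulE; apply: ncmul_local => v hv; rewrite /trunc_deg (leq_ltn_trans hv hu).
rewrite (ncsubst_mul_deg_lt (@deg_lt_trunc_deg N F) (@deg_lt_trunc_deg N G)) !series_mulE.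
by apply: ncmul_local => v hv; rewrite !ncsubst_trunc_deg.
Qed.

Lemma ncsubst_is_monoid_morphism : monoid_morphism ncsubst.
Proof. by split; [rewrite -monom_nil ncsubst_monom /monom_img big_nil | exact: ncsubstM]. Qed.

End Subst.

Section Noetherian.
Variables (K : comNzRingType) (I : finType).
Hypothesis K_noetherian : noetherian K.
Local Notation V := {ffun I -> K^o}.

Definition submodule (M : V -> Prop) :=
  [/\ M 0, forall u v, M u -> M v -> M (u + v) & forall a u, M u -> M (a *: u)].

Definition fg_submodule (M : V -> Prop) :=
  exists n (g : 'I_n -> V), (forall k, M (g k)) /\
    forall v, M v -> exists c : 'I_n -> K, v = \sum_k c k *: g k.

Lemma submodule_sum M n (F : 'I_n -> V) : submodule M ->
  (forall k, M (F k)) -> M (\sum_k F k).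
Proof. by case=> M0 MD _ MF; elim/big_ind: _ => //; exact: MD. Qed.

Lemma submodule_coord0 M i : submodule M -> submodule (fun v => M v /\ v i = 0).
Proof.
case=> M0 MD MZ; split; first by rewrite ffunE.
  by move=> u v [Mu ui] [Mv vi]; split; [exact: MD|rewrite ffunE ui vi addr0].
by move=> a u [Mu ui]; split; [exact: MZ|rewrite ffunE ui scaler0].
Qed.

(* The coordinates [v i] of the [v] in [M] form an ideal of [K], which is
   finitely generated; lifts of its generators together with generators of
   the kernel of [v |-> v i] generate [M]. *)
Lemma fg_submodule_coord0 M i : submodule M ->
  fg_submodule (fun v => M v /\ v i = 0) -> fg_submodule M.
Proof.
move=> sM [n' [h [Mh h_gen]]]; have [M0 MD MZ] := sM.
pose J a := exists2 v, M v & v i = a.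
have J_ideal : is_ideal J.
  split; first by exists 0; rewrite ?ffunE.
  split=> [a b [u Mu <-] [v Mv <-]|c a [u Mu <-]].
    by exists (u + v); [exact: MD|rewrite ffunE].
  by exists (c *: u); [exact: MZ|rewrite ffunE].
have [n [a Ja]] := K_noetherian J_ideal.
have J_a k : J (a k).
  apply/Ja; exists (fun k' => (k' == k)%:R).
  by rewrite (bigD1 k) //= eqxx mul1r big1 ?addr0 // => k' /negbTE ->; rewrite mul0r.
pose va k := projT1 (cid2 (J_a k)).
have Mva k : M (va k) by exact: (projT2 (cid2 (J_a k))).1.
have va_i k : va k i = a k by exact: (projT2 (cid2 (J_a k))).2.
exists (n + n'), (fun k => match split k with inl k1 => va k1 | inr k2 => h k2 end); split.
  by move=> k; case: (split k) => [k1|k2]; [exact: Mva|case: (Mh k2)].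
move=> v Mv; have [c vi] : exists c : 'I_n -> K, v i = \sum_k c k * a k by apply/Ja; exists v.
have [|d Hd] := h_gen (v - \sum_k c k *: va k).
  split.
    apply: MD => //; rewrite -scaleN1r; apply: (MZ).
    by apply: submodule_sum => // k; apply: (MZ).
  rewrite !ffunE vi sum_ffunE; apply/eqP; rewrite subr_eq0; apply/eqP.
  by apply: eq_bigr => k _; rewrite ffunE va_i.
exists (fun k => match split k with inl k1 => c k1 | inr k2 => d k2 end).
rewrite big_split_ord /=.
under eq_bigr do rewrite (unsplitK (inl _ _) : split (lshift n' _) = _).
under [Z in _ + Z]eq_bigr do rewrite (unsplitK (inr _ _) : split (rshift n _) = _).
by rewrite -Hd addrC subrK.
Qed.

Lemma submodule_fg_on (s : seq I) M : submodule M ->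
  (forall v, M v -> forall i, i \notin s -> v i = 0) -> fg_submodule M.
Proof.
elim: s M => [|i s IH] M sM Ms.
  exists 0, (fun _ => 0); split=> [k|v Mv]; first by case: sM.
  by exists (fun _ => 0); rewrite big_ord0; apply/ffunP => j; rewrite ffunE Ms.
apply: (fg_submodule_coord0 (i := i) sM); apply: IH => [|v [Mv vi] j js].
  exact: submodule_coord0.
by have [->|ji] := eqVneq j i; last by apply: Ms; rewrite // inE negb_or ji.
Qed.

Lemma noetherian_fg_submodule M : submodule M -> fg_submodule M.
Proof. by move=> sM; apply: (@submodule_fg_on (enum I)) => // v _ i; rewrite mem_enum. Qed.

End Noetherian.

Lemma noetherian_fg_syzygies (K : comNzRingType) (V : lmodType K) n (g : 'I_n -> V) :
  noetherian K ->
  exists m (z : 'I_m -> 'I_n -> K), (forall l, \sum_j z l j *: g j = 0) /\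
    forall c : 'I_n -> K, \sum_j c j *: g j = 0 ->
      exists d : 'I_m -> K, forall j, c j = \sum_l d l * z l j.
Proof.
move=> K_noeth.
have syz_sub : submodule (fun c : {ffun 'I_n -> K^o} => \sum_j c j *: g j = 0).
  split=> [|u v hu hv|a u hu].
  - by rewrite big1 // => j _; rewrite ffunE scale0r.
  - by under eq_bigr do rewrite ffunE scalerDl; rewrite big_split /= hu hv addr0.
  - by under eq_bigr do rewrite ffunE -scalerA; rewrite -scaler_sumr hu scaler0.
have [m [z [Hz z_gen]]] := noetherian_fg_submodule K_noeth syz_sub.
exists m, (fun l j => z l j); split=> // c Hc.
have [|d Hd] := z_gen [ffun j => c j]; first by under eq_bigr do rewrite ffunE.
exists d => j; have := congr1 (fun f : {ffun 'I_n -> K^o} => f j) Hd.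
by rewrite /= !ffunE sum_ffunE => ->; apply: eq_bigr => l _; rewrite ffunE.
Qed.

Section LinearExtension.
Variables (K : comNzRingType) (X : finType) (V : lmodType K).
Implicit Types (r : series K X) (F : seq X -> V).

Definition deg_bound r : nat :=
  if pselect (exists N, deg_lt N r) is left H then projT1 (cid H) else 0.

Lemma deg_boundP N r : deg_lt N r -> deg_lt (deg_bound r) r.
Proof.
move=> H; rewrite /deg_bound; case: pselect => [H'|[]]; last by exists N.
exact: (projT2 (cid H')).
Qed.

(* On polynomials, the linear map sending the monomial [w] to [F w]; for
   series of infinite support [deg_bound r = 0] and the value is junk. *)
Definition lin_ext r F : V := \sum_(u <- words_lt X (deg_bound r)) r u *: F u.

Lemma lin_extE N r F : deg_lt N r -> lin_ext r F = \sum_(u <- words_lt X N) r u *: F u.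
Proof.
move=> H; have H' := deg_boundP H; set M := maxn N (deg_bound r).
transitivity (\sum_(u <- words_lt X M) r u *: F u).
  by rewrite (@big_words_lt_widen _ (deg_bound r) M) ?leq_maxr // => w hw; rewrite H' ?scale0r.
by rewrite (@big_words_lt_widen _ N M) ?leq_maxl // => w hw; rewrite H ?scale0r.
Qed.

Lemma lin_ext0 F : lin_ext 0 F = 0.
Proof. by rewrite (@lin_extE 0) ?big_nil. Qed.

Lemma lin_extD N r1 r2 F : deg_lt N r1 -> deg_lt N r2 ->
  lin_ext (r1 + r2) F = lin_ext r1 F + lin_ext r2 F.
Proof.
move=> H1 H2; rewrite !(lin_extE _ H1, lin_extE _ H2, lin_extE _ (deg_ltD H1 H2)) -big_split.
by apply: eq_bigr => u _; rewrite scalerDl.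
Qed.

Lemma lin_extZ N a r F : deg_lt N r -> lin_ext (a *: r) F = a *: lin_ext r F.
Proof.
move=> H; rewrite (lin_extE _ (deg_ltZ a H)) (lin_extE _ H) scaler_sumr.
by apply: eq_bigr => u _; rewrite scalerA.
Qed.

Lemma lin_extB N r1 r2 F : deg_lt N r1 -> deg_lt N r2 ->
  lin_ext (r1 - r2) F = lin_ext r1 F - lin_ext r2 F.
Proof.
move=> H1 H2; rewrite (lin_extD _ H1 (deg_ltN H2)) -(scaleN1r r2).
by rewrite (lin_extZ _ _ H2) scaleN1r.
Qed.

Lemma lin_ext_monom w F : lin_ext (monom K w) F = F w.
Proof.
rewrite (lin_extE _ (@deg_lt_monom K X w)).
under eq_bigr do rewrite /monom scaler_nat.
by rewrite big_uniq_pick ?uniq_words_lt // mem_words_lt ltnSn.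
Qed.

Lemma lin_ext_sum N I (s : seq I) (G : I -> series K X) F :
  (forall i, deg_lt N (G i)) -> lin_ext (\sum_(i <- s) G i) F = \sum_(i <- s) lin_ext (G i) F.
Proof.
move=> H; elim: s => [|i s IH]; first by rewrite !big_nil lin_ext0.
by rewrite !big_cons (lin_extD _ (H i) (deg_lt_sum _ H)) IH.
Qed.

End LinearExtension.

Section NCPoly.
Variables (K : comNzRingType) (X : finType).
Implicit Types f g : series K X.

Lemma ncpoly_order_ge f : is_ncpoly f -> order_ge 1 f.
Proof. by case=> f0 _ [|x w]. Qed.
Lemma ncpoly_deg_lt f : is_ncpoly f -> exists N, deg_lt N f.
Proof. by case. Qed.
Lemma ncpolyI N f : order_ge 1 f -> deg_lt N f -> is_ncpoly f.
Proof. by move=> hl hf; split; [exact: hl|exists N]. Qed.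

Lemma ncpoly0 : is_ncpoly (0 : series K X).
Proof. by split=> //; exists 0%N. Qed.
Lemma ncpolyD f g : is_ncpoly f -> is_ncpoly g -> is_ncpoly (f + g).
Proof.
move=> hf hg; have [N1 h1] := ncpoly_deg_lt hf; have [N2 h2] := ncpoly_deg_lt hg.
apply: (ncpolyI (N := maxn N1 N2)).
  exact: order_geD (ncpoly_order_ge hf) (ncpoly_order_ge hg).
by apply: deg_ltD; [apply: (deg_lt_leq _ h1)|apply: (deg_lt_leq _ h2)]; rewrite ?leq_maxl ?leq_maxr.
Qed.
Lemma ncpolyZ a f : is_ncpoly f -> is_ncpoly (a *: f).
Proof.
move=> hf; have [N h] := ncpoly_deg_lt hf.
exact: (ncpolyI (order_geZ a (ncpoly_order_ge hf)) (deg_ltZ a h)).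
Qed.
Lemma ncpolyB f g : is_ncpoly f -> is_ncpoly g -> is_ncpoly (f - g).
Proof. by move=> hf hg; rewrite -scaleN1r; apply/ncpolyD/ncpolyZ. Qed.
Lemma ncpoly_sum I (r : seq I) (F : I -> series K X) :
  (forall i, is_ncpoly (F i)) -> is_ncpoly (\sum_(i <- r) F i).
Proof. by move=> H; elim/big_rec: _ => [|i f _]; [exact: ncpoly0|apply: ncpolyD]. Qed.
Lemma ncpolyMl f g N : is_ncpoly f -> deg_lt N g -> is_ncpoly (f * g).
Proof.
move=> hf hg; have [N1 h1] := ncpoly_deg_lt hf.
apply: (ncpolyI _ (deg_ltM h1 hg)).
by rewrite -[1%N]addn0; apply: order_geM (ncpoly_order_ge hf) _.
Qed.
Lemma ncpolyM f g : is_ncpoly f -> is_ncpoly g -> is_ncpoly (f * g).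
Proof. by move=> hf /ncpoly_deg_lt [N h]; apply: ncpolyMl h. Qed.
Lemma ncpoly_monom (u : seq X) : u != [::] -> is_ncpoly (monom K u).
Proof.
move=> hu; apply: (ncpolyI _ (@deg_lt_monom K X u)) => -[|x w] //= _.
by rewrite /monom; case: eqP => // E; rewrite -E in hu.
Qed.

End NCPoly.

Section GenIdeal.
Variables (K : comNzRingType) (Y : finType) (m : nat) (rels : 'I_m -> series K Y).
Local Notation I := (in_gen_ideal rels).

Lemma in_gen_ideal_sum J (r : seq J) (F : J -> series K Y) :
  (forall i, I (F i)) -> I (\sum_(i <- r) F i).
Proof. by move=> H; elim/big_rec: _ => [|i f _]; [exact: gi_zero|apply: gi_add]. Qed.

End GenIdeal.

Section RightIdeal.
Variables (K : comNzRingType) (X : finType) (R : series K X -> Prop).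
Hypothesis R_ideal : is_right_ideal R.
Implicit Types f g : series K X.

Lemma rideal_ncpoly f : R f -> is_ncpoly f. Proof. by case: R_ideal => h _; apply: h. Qed.
Lemma rideal0 : R 0. Proof. by case: R_ideal => _ [h _]; exact: h. Qed.
Lemma ridealD f g : R f -> R g -> R (f + g). Proof. by case: R_ideal => _ [_ [h _]]; exact: h. Qed.
Lemma ridealZ a f : R f -> R (a *: f). Proof. by case: R_ideal => _ [_ [_ [h _]]]; exact: h. Qed.
Lemma ridealM f g : R f -> is_ncpoly g -> R (f * g).
Proof. by case: R_ideal => _ [_ [_ [_ h]]]; exact: h. Qed.
Lemma ridealB f g : R f -> R g -> R (f - g).
Proof. by move=> hf hg; rewrite -scaleN1r; apply/ridealD/ridealZ. Qed.
Lemma rideal_sum I (r : seq I) (F : I -> series K X) :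
  (forall i, R (F i)) -> R (\sum_(i <- r) F i).
Proof. by move=> H; elim/big_rec: _ => [|i f _]; [exact: rideal0|apply: ridealD]. Qed.

Lemma ridealM_deg_lt f g N : R f -> deg_lt N g -> R (f * g).
Proof.
move=> hf hg; have -> : f * g = g [::] *: f + f * (g - g [::] *: 1).
  by rewrite mulrBr -scalerAr mulr1 addrC subrK.
apply: ridealD; first exact: ridealZ.
apply: ridealM => //; apply: (ncpolyI (N := maxn N 1)) => [[|//]|] //.
  by rewrite /= series_addE series_oppE series_scaleE mulr1 subrr.
apply: deg_ltD; first exact: (deg_lt_leq (leq_maxl N 1) hg).
by apply/deg_ltN/deg_ltZ/(deg_lt_leq (leq_maxr N 1) (@deg_lt_monom K X [::])).
Qed.

End RightIdeal.

Section ReducedWords.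
Variables (K : comNzRingType) (X : finType) (k0 : nat).

(* [{ffun rword -> K^o}] holds the coefficients of the polynomials of degree
   at most [k0], constant term included: the normal forms modulo [R]. *)
Definition rword := seq_sub (words_lt X k0.+1).
Local Notation V := {ffun rword -> K^o}.

Lemma ssval_inj : injective (@ssval _ (words_lt X k0.+1)).
Proof. exact: val_inj. Qed.
Lemma size_rword (t : rword) : (size (ssval t) <= k0)%N.
Proof. by rewrite -ltnS -mem_words_lt; exact: ssvalP. Qed.

Lemma mem_nil_words_lt : [::] \in words_lt X k0.+1.
Proof. by rewrite mem_words_lt. Qed.
Definition rword_nil : rword := SeqSub mem_nil_words_lt.

Lemma sum_rword (W : zmodType) (F : seq X -> W) :
  \sum_(t : rword) F (ssval t) = \sum_(u <- words_lt X k0.+1) F u.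
Proof.
rewrite -[in RHS](val_seq_sub_enum (uniq_words_lt X k0.+1)) big_map.
by rewrite /index_enum !unlock.
Qed.

Lemma sum_rword_pick (W : zmodType) (F : seq X -> W) w : (size w <= k0)%N ->
  \sum_(t : rword) F (ssval t) *+ (ssval t == w) = F w.
Proof.
move=> hw; rewrite (sum_rword (fun u => F u *+ (u == w))) big_uniq_pick ?uniq_words_lt //.
by rewrite mem_words_lt ltnS hw.
Qed.

Definition unitv (w : seq X) : V := [ffun t => ((ssval t == w)%:R : K)].

Lemma sum_unitv (p : V) : \sum_t (p t : K) *: unitv (ssval t) = p.
Proof.
apply/ffunP => t'; rewrite sum_ffunE (bigD1 t') //= !ffunE eqxx big1 ?addr0; first exact: mulr1.
by move=> t /negbTE ne; rewrite !ffunE (inj_eq ssval_inj) eq_sym ne; exact: mulr0.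
Qed.

Lemma sum_unitv_coord (W : lmodType K) (F : seq X -> W) w : (size w <= k0)%N ->
  \sum_t (unitv w t : K) *: F (ssval t) = F w.
Proof.
move=> hw; under eq_bigr do rewrite ffunE scaler_nat.
exact: sum_rword_pick.
Qed.

Definition rpoly (p : V) : series K X := \sum_t (p t : K) *: monom K (ssval t).

Lemma rpoly_is_linear : linear rpoly.
Proof.
move=> a p q; rewrite /rpoly scaler_sumr -big_split.
by apply: eq_bigr => t _; rewrite !ffunE scalerDl scalerA.
Qed.
HB.instance Definition _ := GRing.isLinear.Build K V (series K X) *:%R rpoly rpoly_is_linear.

Lemma rpoly_unitv w : (size w <= k0)%N -> rpoly (unitv w) = monom K w.
Proof. exact: sum_unitv_coord. Qed.

Lemma rpoly_coord (f : series K X) :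
  deg_lt k0.+1 f -> rpoly [ffun t : rword => f (ssval t)] = f.
Proof.
move=> hf; apply: funext => w; rewrite /rpoly series_sumE.
under eq_bigr do rewrite ffunE series_scaleE /monom mulr_natr eq_sym.
rewrite (sum_rword (fun u => f u *+ (u == w))) big_uniq_pick ?uniq_words_lt //.
by rewrite mem_words_lt; case: ltnP => // hw; rewrite hf.
Qed.

Lemma rpoly_monom (p : V) v : rpoly p * monom K v = \sum_t (p t : K) *: monom K (ssval t ++ v).
Proof. by rewrite /rpoly mulr_suml; apply: eq_bigr => t _; rewrite -scalerAl monomM. Qed.

Lemma deg_lt_rpoly_monom (p : V) v : deg_lt (k0 + size v).+1 (rpoly p * monom K v).
Proof.
rewrite rpoly_monom; apply: deg_lt_sum => t; apply: deg_ltZ.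
apply: (deg_lt_leq _ (@deg_lt_monom K X _)).
by rewrite size_cat ltnS leq_add2r size_rword.
Qed.

Lemma lin_ext_rpoly_monom (W : lmodType K) (p : V) v (F : seq X -> W) :
  lin_ext (rpoly p * monom K v) F = \sum_t (p t : K) *: F (ssval t ++ v).
Proof.
rewrite rpoly_monom (@lin_ext_sum _ _ _ (k0 + size v).+1); last first.
  move=> t; apply: deg_ltZ; apply: (deg_lt_leq _ (@deg_lt_monom K X _)).
  by rewrite size_cat ltnS leq_add2r size_rword.
by apply: eq_bigr => t _; rewrite (lin_extZ _ _ (@deg_lt_monom K X _)) lin_ext_monom.
Qed.

End ReducedWords.

Section Reduction.
Variables (K : comNzRingType) (X : finType) (R : series K X -> Prop) (k0 : nat).
Hypothesis R_ideal : is_right_ideal R.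
Local Notation rword := (rword X k0).
Local Notation V := {ffun rword -> K^o}.
Local Notation unitv := (@unitv K X k0).
Local Notation rpoly := (@rpoly K X k0).

Variable top_nf : seq X -> V.
Hypothesis top_nfP : forall w, size w = k0.+1 -> R (monom K w - rpoly (top_nf w)).

Definition nf_rcons (u : seq X) (x : X) : V :=
  if (size u < k0)%N then unitv (rcons u x) else top_nf (rcons u x).

Definition act_letter (x : X) (p : V) : V := \sum_t (p t : K) *: nf_rcons (ssval t) x.

Lemma act_letter_is_linear x : linear (act_letter x).
Proof.
move=> a p q; rewrite /act_letter scaler_sumr -big_split.
by apply: eq_bigr => t _; rewrite !ffunE scalerDl scalerA.
Qed.
HB.instance Definition _ x :=
  GRing.isLinear.Build K V V *:%R (act_letter x) (act_letter_is_linear x).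

(* A normal form of [rpoly p * monom K w] modulo [R], see [phi_lift_red]. *)
Definition act_word (w : seq X) (p : V) : V := foldl (fun q x => act_letter x q) p w.

Lemma act_word_is_linear w : linear (act_word w).
Proof. by elim: w => [|x w IH] a p q //=; rewrite linearP IH. Qed.
HB.instance Definition _ w := GRing.isLinear.Build K V V *:%R (act_word w) (act_word_is_linear w).

Lemma act_word_cons x w p : act_word (x :: w) p = act_word w (act_letter x p). Proof. by []. Qed.
Lemma act_word_cat u v p : act_word (u ++ v) p = act_word v (act_word u p).
Proof. exact: foldl_cat. Qed.

Lemma act_letter_unitv x w : (size w <= k0)%N -> act_letter x (unitv w) = nf_rcons w x.
Proof. exact: (sum_unitv_coord (fun u => nf_rcons u x)). Qed.

Lemma act_word_unitv u v : (size (u ++ v) <= k0)%N -> act_word v (unitv u) = unitv (u ++ v).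
Proof.
elim: v u => [|x v IH] u h; first by rewrite cats0.
have hu : (size u < k0)%N by move: h; rewrite size_cat /=; lia.
by rewrite act_word_cons act_letter_unitv 1?ltnW // /nf_rcons hu IH -cats1 -?catA.
Qed.

Lemma act_word_rword (t : rword) : act_word (ssval t) (unitv [::]) = unitv (ssval t).
Proof. by rewrite act_word_unitv ?size_rword. Qed.

Definition is_top (t : rword) : K := (size (ssval t) == k0)%:R.

Definition reduction (t : rword) (x : X) : series K X :=
  monom K (rcons (ssval t) x) - rpoly (nf_rcons (ssval t) x).

Lemma reduction_short t x : (size (ssval t) < k0)%N -> reduction t x = 0.
Proof. by move=> h; rewrite /reduction /nf_rcons h rpoly_unitv ?subrr // size_rcons. Qed.

Lemma is_top_reduction t x : is_top t *: reduction t x = reduction t x.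
Proof.
rewrite /is_top eqn_leq size_rword /=.
by case: leqP => h; rewrite ?scale1r // reduction_short ?scaler0.
Qed.

Lemma sum_reduction (p : V) x :
  \sum_t (p t : K) *: reduction t x = rpoly p * monom K [:: x] - rpoly (act_letter x p).
Proof.
under eq_bigr do rewrite scalerBr.
rewrite sumrB rpoly_monom /act_letter [rpoly _]linear_sum.
by congr (_ - _); apply: eq_bigr => t _; rewrite ?cats1 ?linearZ.
Qed.

Lemma ideal_reduction t x : R (reduction t x).
Proof.
case: (ltnP (size (ssval t)) k0) => h; first by rewrite reduction_short //; exact: rideal0.
rewrite /reduction /nf_rcons ltnNge h; apply: top_nfP.
by apply/eqP; rewrite size_rcons eqSS eqn_leq size_rword.
Qed.

Definition nf (r : series K X) : V := lin_ext r (fun w => act_word w (unitv [::])).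

Lemma nf_rpoly_monom p v : nf (rpoly p * monom K v) = act_word v p.
Proof.
rewrite /nf lin_ext_rpoly_monom.
under eq_bigr do rewrite act_word_cat act_word_rword.
by rewrite -{2}(sum_unitv p) linear_sum; apply: eq_bigr => t _; rewrite linearZ.
Qed.

End Reduction.

Section Presentation.
Variables (K : comNzRingType) (X : finType) (R : series K X -> Prop) (k0 : nat).
Hypothesis R_ideal : is_right_ideal R.
Local Notation rword := (rword X k0).
Local Notation V := {ffun rword -> K^o}.
Local Notation unitv := (@unitv K X k0).
Local Notation e0 := (unitv [::]).
Local Notation t0 := (rword_nil X k0).
Local Notation rpoly := (@rpoly K X k0).
Local Notation is_top := (@is_top K X k0).

Variable top_nf : seq X -> V.
Hypothesis top_nfP : forall w, size w = k0.+1 -> R (monom K w - rpoly (top_nf w)).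
Local Notation act_letter := (act_letter top_nf).
Local Notation act_word := (act_word top_nf).
Local Notation reduction := (reduction top_nf).
Local Notation nf := (nf top_nf).

Variables (np : nat) (sig : 'I_np -> V).
Hypothesis sig_ideal : forall j, R (rpoly (sig j)).
Hypothesis sig_span :
  forall q, R (rpoly q) -> exists c : 'I_np -> K, q = \sum_j c j *: sig j.
Variables (nz : nat) (z : 'I_nz -> 'I_np -> K).
Hypothesis z_syz : forall l, \sum_j z l j *: sig j = 0.
Hypothesis z_span : forall c : 'I_np -> K, \sum_j c j *: sig j = 0 ->
  exists d : 'I_nz -> K, forall j, c j = \sum_l d l * z l j.

Definition gens := ('I_np + rword * X)%type.
Definition gen_img (g : gens) : series K X :=
  match g with inl j => rpoly (sig j) | inr (t, x) => reduction t x end.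

Definition var := (gens * rword)%type.
Definition var_img (y : var) : series K X := gen_img y.1 * monom K (ssval y.2).

Lemma ideal_gen_img g : R (gen_img g).
Proof. by case: g => [j|[t x]] /=; [exact: sig_ideal|exact: ideal_reduction]. Qed.
Lemma ideal_var_img y : R (var_img y).
Proof. exact: (ridealM_deg_lt R_ideal (ideal_gen_img _) (@deg_lt_monom K X _)). Qed.
Lemma order_ge_var_img y : order_ge 1 (var_img y).
Proof. exact/ncpoly_order_ge/(rideal_ncpoly R_ideal)/ideal_var_img. Qed.

Local Notation phi := (ncsubst var_img).
HB.instance Definition _ := GRing.isMonoidMorphism.Build (series K var) (series K X) phi
  (ncsubst_is_monoid_morphism order_ge_var_img).

Definition yvar (y : var) : series K var := monom K [:: y].

Lemma phi_yvar y : phi (yvar y) = var_img y.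
Proof. by rewrite (ncsubst_monom order_ge_var_img) /monom_img big_cons big_nil mulr1. Qed.
Lemma var_img_nil g : var_img (g, t0) = gen_img g.
Proof. by rewrite /var_img /= monom_nil mulr1. Qed.

Lemma ideal_phi F : is_ncpoly F -> R (phi F).
Proof.
move=> hF; have [N HN] := ncpoly_deg_lt hF; rewrite (ncsubst_expand order_ge_var_img HN).
apply: (rideal_sum R_ideal) => -[|y u]; first by case: hF => -> _; rewrite scale0r; exact: rideal0.
apply: (ridealZ R_ideal); rewrite /monom_img big_cons.
elim: u y => [|y' u IH] y; first by rewrite big_nil mulr1; exact: ideal_var_img.
by rewrite big_cons; apply: (ridealM R_ideal (ideal_var_img y)); exact/(rideal_ncpoly R_ideal)/IH.
Qed.

Lemma ncpoly_phi F : is_ncpoly F -> is_ncpoly (phi F).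
Proof. by move/ideal_phi/(rideal_ncpoly R_ideal). Qed.

Definition lift_gmul (g : gens) (p : V) : series K var := \sum_t (p t : K) *: yvar (g, t).

Lemma phi_lift_gmul g p : phi (lift_gmul g p) = gen_img g * rpoly p.
Proof.
rewrite linear_sum mulr_sumr; apply: eq_bigr => t _.
by rewrite linearZ /= phi_yvar -scalerAr.
Qed.

(* Reading [w] letter by letter, each step reduces the top-length words [t]
   of the current normal form with [reduction t x]; [lift_red w p] records
   these steps as a preimage of [rpoly p * monom w - rpoly (act_word w p)].
   Likewise [lift_gword w g] is a preimage of [gen_img g * monom w], split as
   [g * nf w + g * (w - nf w)]. *)
Fixpoint lift_red (w : seq X) (p : V) : series K var :=
  if w is x :: w' then
    \sum_t (is_top t * p t) *: (lift_gmul (inr (t, x)) (act_word w' e0)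
                             + yvar (inr (t, x), t0) * lift_red w' e0)
    + lift_red w' (act_letter x p)
  else 0.

Definition lift_gword (w : seq X) (g : gens) : series K var :=
  lift_gmul g (act_word w e0) + yvar (g, t0) * lift_red w e0.

Lemma lift_red_cons x w p : lift_red (x :: w) p =
  \sum_t (is_top t * p t) *: lift_gword w (inr (t, x)) + lift_red w (act_letter x p).
Proof. by []. Qed.

Lemma phi_lift w :
  (forall p, phi (lift_red w p) = rpoly p * monom K w - rpoly (act_word w p)) /\
  (forall g, phi (lift_gword w g) = gen_img g * monom K w).
Proof.
elim: w => [|x w [IHred IHg]].
  split=> [p|g]; first by rewrite raddf0 monom_nil mulr1 subrr.
  by rewrite /lift_gword mulr0 addr0 phi_lift_gmul /= rpoly_unitv // monom_nil.
have phi_red p :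
    phi (lift_red (x :: w) p) = rpoly p * monom K (x :: w) - rpoly (act_word (x :: w) p).
  rewrite lift_red_cons rmorphD rmorph_sum /= IHred.
  under eq_bigr do rewrite linearZ /= IHg /= mulrC -scalerA scalerAl is_top_reduction scalerAl.
  by rewrite -mulr_suml sum_reduction mulrBl -mulrA monomM addrA subrK.
split=> // g; rewrite /lift_gword rmorphD rmorphM /= -lift_red_cons phi_red.
by rewrite phi_lift_gmul phi_yvar var_img_nil rpoly_unitv // monom_nil mul1r -mulrDr addrC subrK.
Qed.

Lemma phi_lift_red w p : phi (lift_red w p) = rpoly p * monom K w - rpoly (act_word w p).
Proof. exact: (phi_lift w).1. Qed.
Lemma lift_red_is_linear w : linear (lift_red w).
Proof.
elim: w => [|x w IH] a p q; first by rewrite /= scaler0 addr0.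
rewrite !lift_red_cons linearP IH scalerDr scaler_sumr addrACA -big_split /=; congr (_ + _).
by apply: eq_bigr => t _; rewrite !ffunE scalerA -scalerDl mulrDr mulrCA.
Qed.
HB.instance Definition _ w :=
  GRing.isLinear.Build K V (series K var) *:%R (lift_red w) (lift_red_is_linear w).

Lemma lift_red_short u : forall s v, (size (s ++ u) <= k0)%N ->
  lift_red (u ++ v) (unitv s) = lift_red v (unitv (s ++ u)).
Proof.
elim: u => [|x u IH] s v h; first by rewrite cats0.
have hs : (size s < k0)%N by move: h; rewrite size_cat /=; lia.
rewrite cat_cons lift_red_cons big1 ?add0r => [|t _]; last first.
  rewrite ffunE; case: (eqVneq (ssval t) s) => [st|_]; last by rewrite mulr0 scale0r.
  by rewrite /is_top st (ltn_eqF hs) mul0r scale0r.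
by rewrite act_letter_unitv ?(ltnW hs) // /nf_rcons hs IH cat_rcons.
Qed.

Lemma lift_red_rword_cat (t : rword) v : lift_red (ssval t ++ v) e0 = lift_red v (unitv (ssval t)).
Proof. by rewrite lift_red_short // size_rword. Qed.

Definition lift_nf (r : series K X) : series K var := lin_ext r (fun w => lift_red w e0).

Lemma lift_nf_rpoly_monom p v : lift_nf (rpoly p * monom K v) = lift_red v p.
Proof.
rewrite /lift_nf lin_ext_rpoly_monom; under eq_bigr do rewrite lift_red_rword_cat.
by rewrite -{2}(sum_unitv p) linear_sum; apply: eq_bigr => t _; rewrite linearZ.
Qed.

Lemma phi_lift_nf N r : deg_lt N r -> phi (lift_nf r) = r - rpoly (nf r).
Proof.
move=> H; rewrite /lift_nf /nf !(lin_extE _ H) linear_sum [rpoly _]linear_sum.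
rewrite [Z in _ = Z - _](series_expand H) -sumrB.
apply: eq_bigr => u _; rewrite !linearZ /= phi_lift_red rpoly_unitv // monom_nil mul1r.
by rewrite scalerDr.
Qed.

Definition nf_lift (r : series K X) (c : 'I_np -> K) : series K var :=
  \sum_j c j *: yvar (inl j, t0) + lift_nf r.

Lemma phi_nf_lift N r c : deg_lt N r ->
  phi (nf_lift r c) = rpoly (\sum_j c j *: sig j) + (r - rpoly (nf r)).
Proof.
move=> H; rewrite /nf_lift rmorphD /= (phi_lift_nf H) linear_sum /=.
congr (_ + _); rewrite linear_sum; apply: eq_bigr => j _.
by rewrite !linearZ /= phi_yvar var_img_nil.
Qed.

Lemma ncpoly_yvar y : is_ncpoly (yvar y). Proof. exact: ncpoly_monom. Qed.
Lemma ncpoly_lift_gmul g p : is_ncpoly (lift_gmul g p).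
Proof. by apply: ncpoly_sum => t; apply/ncpolyZ/ncpoly_yvar. Qed.
Lemma ncpoly_lift_red w p : is_ncpoly (lift_red w p).
Proof.
elim: w p => [|x w IH] p; first exact: ncpoly0.
apply/ncpolyD/IH/ncpoly_sum => t; apply/ncpolyZ/ncpolyD; first exact: ncpoly_lift_gmul.
by apply/ncpolyM/IH/ncpoly_yvar.
Qed.
Lemma ncpoly_lift_nf r : is_ncpoly (lift_nf r).
Proof. by apply: ncpoly_sum => u; apply/ncpolyZ/ncpoly_lift_red. Qed.
Lemma ncpoly_nf_lift r c : is_ncpoly (nf_lift r c).
Proof.
apply/ncpolyD/ncpoly_lift_nf.
by apply: ncpoly_sum => j; apply/ncpolyZ/ncpoly_yvar.
Qed.

Lemma nf_span r : R r -> exists c : 'I_np -> K, nf r = \sum_j c j *: sig j.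
Proof.
move=> Rr; apply: sig_span; have [N HN] := ncpoly_deg_lt (rideal_ncpoly R_ideal Rr).
have -> : rpoly (nf r) = r - phi (lift_nf r) by rewrite (phi_lift_nf HN) opprB addrC subrK.
exact/(ridealB R_ideal Rr)/ideal_phi/ncpoly_lift_nf.
Qed.

Definition nf_coord (r : series K X) : 'I_np -> K :=
  if pselect (exists c : 'I_np -> K, nf r = \sum_j c j *: sig j) is left H
  then projT1 (cid H) else fun _ => 0.

Lemma nf_coordP r : R r -> nf r = \sum_j nf_coord r j *: sig j.
Proof.
move=> Rr; rewrite /nf_coord; case: pselect => [H|[]]; last exact: nf_span.
exact: (projT2 (cid H)).
Qed.

Lemma phi_nf_lift_coord r : R r -> phi (nf_lift r (nf_coord r)) = r.
Proof.
move=> Rr; have [N HN] := ncpoly_deg_lt (rideal_ncpoly R_ideal Rr).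
by rewrite (phi_nf_lift _ HN) -nf_coordP // addrC subrK.
Qed.

Definition relator (F : series K var) : series K var :=
  F - nf_lift (phi F) (nf_coord (phi F)).

Definition relator_index := ('I_nz + (var + var * var))%type.

Definition defining_rel (i : relator_index) : series K var :=
  match i with
  | inl l => \sum_j z l j *: yvar (inl j, t0)
  | inr (inl y) => relator (yvar y)
  | inr (inr (y1, y2)) => relator (yvar y1 * yvar y2)
  end.

Definition rels (i : 'I_#|{: relator_index}|) : series K var := defining_rel (enum_val i).
Local Notation in_rels := (in_gen_ideal rels).

Lemma in_rels_defining_rel i : in_rels (defining_rel i).
Proof. by have := gi_gen rels (enum_rank i); rewrite /rels enum_rankK. Qed.

Lemma phi_relator F : is_ncpoly F -> phi (relator F) = 0.
Proof. by move=> hF; rewrite /relator rmorphB /= phi_nf_lift_coord ?subrr //; exact: ideal_phi. Qed.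

Lemma phi_defining_rel i : phi (defining_rel i) = 0.
Proof.
case: i => [l|[y|[y1 y2]]] /=; last 2 first.
- exact/phi_relator/ncpoly_yvar.
- exact/phi_relator/ncpolyM/ncpoly_yvar/ncpoly_yvar.
rewrite linear_sum -[RHS](linear0 rpoly) -(z_syz l) [RHS]linear_sum.
by apply: eq_bigr => j _; rewrite !linearZ /= phi_yvar var_img_nil.
Qed.

Lemma ncpoly_defining_rel i : is_ncpoly (defining_rel i).
Proof.
case: i => [l|[y|[y1 y2]]] /=.
- by apply: ncpoly_sum => j; apply/ncpolyZ/ncpoly_yvar.
- exact/ncpolyB/ncpoly_nf_lift/ncpoly_yvar.
- exact/ncpolyB/ncpoly_nf_lift/ncpolyM/ncpoly_yvar/ncpoly_yvar.
Qed.

Lemma phi_in_rels F : in_rels F -> phi F = 0.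
Proof.
elim=> {F} [i|||c f _ h|a f _ _ h|f b _ _ h]; first exact: phi_defining_rel.
- exact: raddf0.
- by move=> f g _ h1 _ h2; rewrite (raddfD phi f g) /= h1 h2 addr0.
- by change (phi (c *: (f : series K var)) = 0); rewrite linearZ /= h scaler0.
- by rewrite (rmorphM phi a (f : series K var)) /= h mulr0.
- by rewrite (rmorphM phi (f : series K var) b) /= h mul0r.
Qed.

(* The invariant of the main induction: [Z] is congruent modulo the relations
   to the canonical preimage of its image. *)
Definition congr_nf (Z : series K var) : Prop :=
  is_ncpoly Z /\ exists c : 'I_np -> K,
    nf (phi Z) = \sum_j c j *: sig j /\ in_rels (Z - nf_lift (phi Z) c).

Lemma congr_nf0 : congr_nf 0.
Proof.
split; first exact: ncpoly0.
exists (fun _ => 0); rewrite raddf0 /nf /nf_lift /lift_nf !lin_ext0 addr0.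
have sum0 (W : lmodType K) (v : 'I_np -> W) : \sum_j (0 : K) *: v j = 0.
  by rewrite big1 // => j _; rewrite scale0r.
by rewrite !sum0 subrr; split=> //; exact: gi_zero.
Qed.

Lemma congr_nfD Z1 Z2 : congr_nf Z1 -> congr_nf Z2 -> congr_nf (Z1 + Z2).
Proof.
move=> [h1 [c1 [e1 i1]]] [h2 [c2 [e2 i2]]].
have [N1 f1] := ncpoly_deg_lt (ncpoly_phi h1); have [N2 f2] := ncpoly_deg_lt (ncpoly_phi h2).
have g1 := deg_lt_leq (leq_maxl N1 N2) f1; have g2 := deg_lt_leq (leq_maxr N1 N2) f2.
split; first exact: ncpolyD.
exists (fun j => c1 j + c2 j); rewrite rmorphD /=; split.
  rewrite /nf (lin_extD _ g1 g2) -/(nf _) -/(nf _) e1 e2 -big_split.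
  by apply: eq_bigr => j _; rewrite scalerDl.
have -> : nf_lift (phi Z1 + phi Z2) (fun j => c1 j + c2 j) =
    nf_lift (phi Z1) c1 + nf_lift (phi Z2) c2.
  rewrite /nf_lift /lift_nf (lin_extD _ g1 g2) addrACA -big_split; congr (_ + _).
  by apply: eq_bigr => j _; rewrite scalerDl.
by rewrite opprD addrACA; apply: gi_add.
Qed.

Lemma congr_nfZ a Z : congr_nf Z -> congr_nf (a *: Z).
Proof.
move=> [h [c [e i]]]; have [N f] := ncpoly_deg_lt (ncpoly_phi h).
split; first exact: ncpolyZ.
exists (fun j => a * c j); rewrite linearZ /=; split.
  by rewrite /nf (lin_extZ _ _ f) -/(nf _) e scaler_sumr; apply: eq_bigr => j _; rewrite scalerA.
have -> : nf_lift (a *: phi Z) (fun j => a * c j) = a *: nf_lift (phi Z) c.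
  rewrite /nf_lift /lift_nf (lin_extZ _ _ f) scalerDr; congr (_ + _).
  by rewrite scaler_sumr; apply: eq_bigr => j _; rewrite scalerA.
by rewrite -scalerBr; apply: gi_scale.
Qed.

Lemma congr_nfB Z1 Z2 : congr_nf Z1 -> congr_nf Z2 -> congr_nf (Z1 - Z2).
Proof. by move=> h1 h2; rewrite -scaleN1r; apply/congr_nfD/congr_nfZ. Qed.

Lemma congr_nf_sum I (r : seq I) (F : I -> series K var) :
  (forall i, congr_nf (F i)) -> congr_nf (\sum_(i <- r) F i).
Proof. by move=> H; elim/big_rec: _ => [|i f _]; [exact: congr_nf0|apply: congr_nfD]. Qed.

Lemma congr_nf_rels (Z Z' : series K var) :
  is_ncpoly Z -> in_rels (Z - Z') -> congr_nf Z' -> congr_nf Z.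
Proof.
move=> h i [_ [c [e i']]].
have E : phi Z = phi Z' by apply/eqP; rewrite -subr_eq0 -rmorphB; apply/eqP/phi_in_rels.
split=> //; exists c; rewrite E; split=> //.
by rewrite -(subrK Z' Z) -addrA; apply: gi_add.
Qed.

Lemma congr_nf_relator F : is_ncpoly F -> in_rels (relator F) -> congr_nf F.
Proof.
move=> hF i; split=> //; exists (nf_coord (phi F)); split=> //.
exact/nf_coordP/ideal_phi.
Qed.

Lemma congr_nf_yvar y : congr_nf (yvar y).
Proof. exact: congr_nf_relator (ncpoly_yvar y) (in_rels_defining_rel (inr (inl y))). Qed.

Lemma congr_nf_yvar2 y1 y2 : congr_nf (yvar y1 * yvar y2).
Proof.
apply: congr_nf_relator (in_rels_defining_rel (inr (inr (y1, y2)))).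
exact/ncpolyM/ncpoly_yvar/ncpoly_yvar.
Qed.

Lemma congr_nf_lift_gmul g p : congr_nf (lift_gmul g p).
Proof. by apply: congr_nf_sum => t; apply/congr_nfZ/congr_nf_yvar. Qed.

(* [lift_red w p] is itself the canonical preimage of its image, with no [sig] part. *)
Lemma congr_nf_lift_red w p : congr_nf (lift_red w p).
Proof.
split; first exact: ncpoly_lift_red.
have E : phi (lift_red w p) = rpoly p * monom K w - rpoly (act_word w p) * monom K [::].
  by rewrite phi_lift_red monom_nil mulr1.
have f1 := @deg_lt_rpoly_monom K X k0 p w.
have f2 : deg_lt (k0 + size w).+1 (rpoly (act_word w p) * monom K [::]).
  by apply: deg_lt_leq (@deg_lt_rpoly_monom K X k0 _ [::]); rewrite addn0 ltnS leq_addr.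
exists (fun _ => 0); rewrite E.
have sum0 : \sum_j (0 : K) *: sig j = 0 by rewrite big1 // => j _; rewrite scale0r.
rewrite sum0 /nf (lin_extB _ f1 f2) -!/(nf _) !nf_rpoly_monom subrr; split=> //.
rewrite /nf_lift /lift_nf (lin_extB _ f1 f2) -!/(lift_nf _) !lift_nf_rpoly_monom /= subr0.
by rewrite big1 ?add0r ?subrr => [|j _]; [exact: gi_zero|rewrite scale0r].
Qed.

Lemma congr_nf_lift_gword w (t : rword) x : is_top t = 1 -> congr_nf (lift_gword w (inr (t, x))).
Proof.
move=> topt.
have -> : lift_gword w (inr (t, x)) =
    lift_red (x :: w) (unitv (ssval t)) - lift_red w (act_letter x (unitv (ssval t))).
  rewrite lift_red_cons (bigD1 t) //= ffunE eqxx mulr1 topt scale1r big1 ?addr0 ?addrK //.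
  by move=> t' ne; rewrite ffunE (inj_eq (@ssval_inj X k0)) (negbTE ne) mulr0 scale0r.
exact/congr_nfB/congr_nf_lift_red/congr_nf_lift_red.
Qed.

Lemma congr_nf_yvar_lift_red w (t : rword) x :
  is_top t = 1 -> congr_nf (yvar (inr (t, x), t0) * lift_red w e0).
Proof.
move=> topt; have -> : yvar (inr (t, x), t0) * lift_red w e0 =
    lift_gword w (inr (t, x)) - lift_gmul (inr (t, x)) (act_word w e0) by rewrite addrC addKr.
exact/congr_nfB/congr_nf_lift_gmul/congr_nf_lift_gword.
Qed.

(* By induction on [w]: the new terms are products of two variables or of the
   form [yvar * lift_red], both handled above. *)
Lemma congr_nf_lift_red_yvar w p y : congr_nf (lift_red w p * yvar y).
Proof.
elim: w p => [|x w IH] p; first by rewrite mul0r; exact: congr_nf0.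
rewrite lift_red_cons mulrDl mulr_suml; apply/congr_nfD/IH/congr_nf_sum => t.
rewrite -scalerAl /is_top; case: eqP => [topt|_]; last by rewrite mul0r scale0r; exact: congr_nf0.
apply: congr_nfZ; rewrite /lift_gword mulrDl -mulrA; apply: congr_nfD.
  rewrite /lift_gmul mulr_suml; apply: congr_nf_sum => t'.
  by rewrite -scalerAl; apply/congr_nfZ/congr_nf_yvar2.
have [hP [c [_ i]]] := IH e0.
apply: (@congr_nf_rels _ (yvar (inr (t, x), t0) * nf_lift (phi (lift_red w e0 * yvar y)) c)).
- exact/ncpolyM/hP/ncpoly_yvar.
- by rewrite -mulrBr; apply/gi_mull/i/ncpoly_yvar.
rewrite /nf_lift mulrDr mulr_sumr /lift_nf /lin_ext mulr_sumr; apply: congr_nfD.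
  by apply: congr_nf_sum => j; rewrite -scalerAr; apply/congr_nfZ/congr_nf_yvar2.
apply: congr_nf_sum => u; rewrite -scalerAr; apply/congr_nfZ/congr_nf_yvar_lift_red.
by rewrite /is_top topt eqxx.
Qed.

Lemma congr_nf_monom (u : seq var) : u != [::] -> congr_nf (monom K u).
Proof.
elim/last_ind: u => [|u y IH] // _.
have [->|/IH [hP [c [_ i]]]] := eqVneq u [::]; first exact: congr_nf_yvar.
rewrite -cats1 -monomM -/(yvar y).
apply: (@congr_nf_rels _ (nf_lift (phi (monom K u)) c * yvar y)).
- exact/ncpolyM/ncpoly_yvar.
- by rewrite -mulrBl; apply/gi_mulr/i/ncpoly_yvar.
rewrite /nf_lift mulrDl mulr_suml /lift_nf /lin_ext mulr_suml; apply: congr_nfD.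
  by apply: congr_nf_sum => j; rewrite -scalerAl; apply/congr_nfZ/congr_nf_yvar2.
by apply: congr_nf_sum => v; rewrite -scalerAl; apply/congr_nfZ/congr_nf_lift_red_yvar.
Qed.

Lemma congr_nfP Z : is_ncpoly Z -> congr_nf Z.
Proof.
move=> h; have [N HN] := ncpoly_deg_lt h; rewrite (series_expand HN).
apply: congr_nf_sum => -[|y u]; last exact/congr_nfZ/congr_nf_monom.
by case: h => -> _; rewrite scale0r; exact: congr_nf0.
Qed.

Lemma ker_phi Z : is_ncpoly Z -> phi Z = 0 -> in_rels Z.
Proof.
move=> h phiZ; have [_ [c [e i]]] := congr_nfP h.
rewrite phiZ /nf lin_ext0 in e; have [d Hd] := z_span (esym e).
rewrite phiZ /nf_lift /lift_nf lin_ext0 addr0 in i.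
rewrite -(subrK (\sum_j c j *: yvar (inl j, t0)) Z); apply: gi_add i _.
have -> : \sum_j c j *: yvar (inl j, t0) = \sum_l d l *: defining_rel (inl l).
  under eq_bigr do rewrite Hd scaler_suml.
  rewrite exchange_big /=; apply: eq_bigr => l _; rewrite scaler_sumr.
  by apply: eq_bigr => j _; rewrite scalerA.
by apply: in_gen_ideal_sum => l; apply/gi_scale/in_rels_defining_rel.
Qed.

Theorem fin_presented_of_reduction : fin_presented_subalg R.
Proof.
exists var, phi, #|{: relator_index}|, rels; split=> [i|]; first exact: ncpoly_defining_rel.
split.
  split=> [f g _ _|]; first exact: (raddfD phi (f : series K var)).
  split=> [c f _|f g _ _]; last exact: (rmorphM phi (f : series K var)).
  by change (phi (c *: (f : series K var)) = c *: phi f); rewrite linearZ.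
split; first exact: ideal_phi.
split=> [r Rr|f hf].
  by exists (nf_lift r (nf_coord r)); split; [exact: ncpoly_nf_lift|exact: phi_nf_lift_coord].
by split; [exact: ker_phi|exact: phi_in_rels].
Qed.

End Presentation.

Lemma quotient_fg_top_nf (K : comNzRingType) (X : finType) (R : series K X -> Prop) :
  quotient_fg R -> exists k0 (top_nf : seq X -> {ffun rword X k0 -> K^o}),
    forall w, size w = k0.+1 -> R (monom K w - rpoly (top_nf w)).
Proof.
case=> n [g [g_ncpoly g_span]].
have [k0 deg_g] : exists k0, forall i, deg_lt k0.+1 (g i).
  have deg i := ncpoly_deg_lt (g_ncpoly i).
  exists (\max_i projT1 (cid (deg i))) => i w hw; apply: (projT2 (cid (deg i))).
  by apply: leq_trans hw; apply: leq_trans (leqnSn _); exact: (leq_bigmax i).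
have top_nf_ex w : exists q : {ffun rword X k0 -> K^o},
    size w = k0.+1 -> R (monom K w - rpoly q).
  have [hw|hw] := eqVneq (size w) k0.+1; last by exists 0 => E; rewrite E eqxx in hw.
  have [|c Rc] := g_span (monom K w); first by apply: ncpoly_monom; rewrite -size_eq0 hw.
  exists [ffun t => (\sum_i c i *: (g i : series K X)) (ssval t)] => _.
  rewrite rpoly_coord; last by apply: deg_lt_sum => i; apply: deg_ltZ.
  by congr R: Rc; apply: funext => u; rewrite series_addE series_oppE series_sumE.
by exists k0, (fun w => projT1 (cid (top_nf_ex w))) => w; apply: (projT2 (cid (top_nf_ex w))).
Qed.

Lemma noetherian_rpoly_span (K : comNzRingType) (X : finType) (R : series K X -> Prop) k0 :
  noetherian K -> is_right_ideal R ->
  exists np (sig : 'I_np -> {ffun rword X k0 -> K^o}), (forall j, R (rpoly (sig j))) /\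
    forall q, R (rpoly q) -> exists c : 'I_np -> K, q = \sum_j c j *: sig j.
Proof.
move=> K_noeth R_ideal; apply: (noetherian_fg_submodule K_noeth).
split=> [|p q Rp Rq|a p Rp]; rewrite ?raddf0 ?raddfD ?linearZ.
- exact: rideal0.
- exact: ridealD.
- exact: ridealZ.
Qed.

Theorem lemma2p3 (K : comNzRingType) (X : finType) (R : (seq X -> K) -> Prop) :
  noetherian K ->
  is_right_ideal R ->
  quotient_fg R ->
  fin_presented_subalg R.
Proof.
move=> K_noeth R_ideal /quotient_fg_top_nf [k0 [top_nf top_nfP]].
have [np [sig [sig_ideal sig_span]]] := noetherian_rpoly_span k0 K_noeth R_ideal.
have [nz [z [z_syz z_span]]] := noetherian_fg_syzygies sig K_noeth.
exact: (fin_presented_of_reduction R_ideal top_nfP sig_ideal sig_span z_syz z_span).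
Qed.
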